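(* Let $n\ge2$ be even and $Q(x)=\sum_{i=1}^{n/2-1}Tr_1^n(x^{2^i+1})+Tr_1^{n/2}(x^{2^{n/2}+1})$ on $\mathbb{F}_{2^n}$. Then $Q$ is bent but not negabent.
   Context: $Tr_1^m(z)=z+z^2+\dots+z^{2^{m-1}}$; $Tr=Tr_1^n$. Fix a self-dual basis $\{\alpha_i\}$ of $\mathbb{F}_{2^n}$ over $\mathbb{F}_2$ ($Tr(\alpha_i\alpha_j)=\delta_{ij}$), identify $\mathbb{F}_{2^n}$ with $\mathbb{F}_2^n$ via coordinates, and let $wt(x)$ be the number of nonzero coordinates. For $g:\mathbb{F}_{2^n}\to\mathbb{F}_2$: $g$ is bent if $\left|\sum_x(-1)^{g(x)+Tr(\mu x)}\right|=2^{n/2}$ for all $\mu$; negabent if $\left|\sum_x(-1)^{g(x)+Tr(\mu x)}\mathrm{i}^{wt(x)}\right|=2^{n/2}$ for all $\mu$ ($\mathrm{i}=\sqrt{-1}$). *)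

From HB Require Import structures.
From mathcomp Require Import all_boot all_order all_algebra all_field.
Set Implicit Arguments. Unset Strict Implicit. Unset Printing Implicit Defensive.
Import Order.TTheory GRing.Theory Num.Theory.
Local Open Scope ring_scope.

Section Defs.
Variable F : finFieldType.

Definition Trm (m : nat) (z : F) : F := \sum_(i < m) z ^+ (2 ^ i).

Definition Qfun (n : nat) (x : F) : F :=
  \sum_(1 <= i < n./2) Trm n (x ^+ (2 ^ i + 1))
  + Trm n./2 (x ^+ (2 ^ n./2 + 1)).

Definition self_dual (n : nat) (alpha : 'I_n -> F) : Prop :=
  forall i j : 'I_n, Trm n (alpha i * alpha j) = (i == j)%:R.

Definition coords (n : nat) (alpha : 'I_n -> F) (x : F) : {ffun 'I_n -> bool} :=
  odflt [ffun => false]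
    [pick c : {ffun 'I_n -> bool} | x == \sum_(i < n) (c i)%:R * alpha i].

Definition wt (n : nat) (alpha : 'I_n -> F) (x : F) : nat :=
  #|[set i | coords alpha x i]|.

Definition sgn (b : F) : algC := if b == 0 then 1 else -1.

(* g : F -> F_2 is represented as a map F -> F with values in {0,1} *)
Definition is_bent (n : nat) (g : F -> F) : Prop :=
  forall mu : F,
    `| \sum_(x : F) sgn (g x + Trm n (mu * x)) | = (2 ^ n./2)%:R.

Definition is_negabent (n : nat) (alpha : 'I_n -> F) (g : F -> F) : Prop :=
  forall mu : F,
    `| \sum_(x : F) sgn (g x + Trm n (mu * x)) * 'i ^+ (wt alpha x) |
      = (2 ^ n./2)%:R.

End Defs.

From mathcomp Require Import all_boot all_algebra all_field.
From mathcomp Require Import zify ring.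
Import GRing.Theory Num.Theory.
Set Implicit Arguments.
Unset Strict Implicit.
Unset Printing Implicit Defensive.
Local Open Scope ring_scope.

(* The polarization of [Q] is [Q (x + a) = Q x + Q a + Tr (x * (Tr a + a))].  For [n] even
   [Tr 1 = 0], so [a |-> Tr a + a] is injective and every Walsh coefficient of [Q] squares
   to [2 ^ n]: [Q] is bent.
   Over a self-dual basis [Tr (x * y)] is the parity of the common support of [x] and [y], so
   [(-1) ^ Q x * 'i ^ wt x] is a character of [(F, +)] up to the factor [(-1) ^ (Tr x * Tr y)],
   which the twist by [(-'i) ^ Tr x] removes.  A character has the form
   [x |-> (-1) ^ Tr (mu * x)]; at that [mu] the nega-Walsh sum collapses to
   [\sum_x 'i ^ Tr x = 2 ^ n.-1 * (1 + 'i)], of modulus [2 ^ (n - 1/2) <> 2 ^ (n/2)]. *)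

Section CharacteristicTwo.
Variable F : finFieldType.
Hypothesis F_char2 : 2%N \in [pchar F].

Lemma exprD_pow2 k (x y : F) : (x + y) ^+ (2 ^ k) = x ^+ (2 ^ k) + y ^+ (2 ^ k).
Proof.
by apply: exprDn_pchar; rewrite pnatX (pnatE _ (isT : prime 2)) F_char2.
Qed.

Lemma exprD_pow2_addn1 k (x y : F) : (x + y) ^+ (2 ^ k + 1) =
  x ^+ (2 ^ k + 1) + y ^+ (2 ^ k + 1) + (x ^+ (2 ^ k) * y + y ^+ (2 ^ k) * x).
Proof.
rewrite !addn1 !exprSr exprD_pow2; set X := x ^+ _; set Y := y ^+ _; ring.
Qed.

Lemma TrmD m (x y : F) : Trm m (x + y) = Trm m x + Trm m y.
Proof. by rewrite /Trm -big_split; apply: eq_bigr => i _; rewrite exprD_pow2. Qed.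

Lemma Trm0 m : Trm m (0 : F) = 0.
Proof. by rewrite /Trm big1 // => i _; rewrite expr0n expn_eq0. Qed.

Lemma Trm_sum m (I : Type) (r : seq I) (P : pred I) (f : I -> F) :
  Trm m (\sum_(i <- r | P i) f i) = \sum_(i <- r | P i) Trm m (f i).
Proof. exact: (big_morph (Trm m) (TrmD m) (Trm0 m)). Qed.

Lemma Trm_sqr m (y : F) : Trm m (y ^+ 2) = Trm m y ^+ 2.
Proof.
rewrite /Trm (big_morph (fun x => x ^+ (2 ^ 1)) (exprD_pow2 1) (expr0n _ _)).
by apply: eq_bigr => i _; rewrite expn1 exprAC.
Qed.

Lemma Trm_sqr_fixed m (y : F) : y ^+ (2 ^ m) = y -> Trm m y ^+ 2 = Trm m y.
Proof.
move=> ym; rewrite -Trm_sqr /Trm.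
have: \sum_(i < m.+1) y ^+ (2 ^ i) = \sum_(i < m.+1) y ^+ (2 ^ i) by [].
rewrite {1}big_ord_recl big_ord_recr /= expr1 ym [_ + y]addrC => /addrI <-.
by apply: eq_bigr => i _; rewrite -exprM expnS.
Qed.

Definition is_bit (t : F) := (t == 0) || (t == 1).

Lemma is_bitP (t : F) : t ^+ 2 = t -> is_bit t.
Proof.
move=> tt; have : t * (t - 1) == 0 by rewrite mulrBr mulr1 -expr2 tt subrr.
by rewrite mulf_eq0 subr_eq0.
Qed.

Lemma is_bitD (a b : F) : is_bit a -> is_bit b -> is_bit (a + b).
Proof.
move=> /orP[]/eqP-> /orP[]/eqP->;
  by rewrite /is_bit ?addr0 ?add0r ?addrr_pchar2 ?eqxx ?orbT.
Qed.

Lemma is_bitM (a b : F) : is_bit a -> is_bit b -> is_bit (a * b).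
Proof. by move=> /orP[]/eqP-> bb; rewrite ?mul0r ?mul1r // /is_bit eqxx. Qed.

Lemma is_bit_nat (b : bool) : is_bit b%:R.
Proof. by case: b; rewrite /is_bit eqxx ?orbT. Qed.

Lemma eq1_nat_bool (b : bool) : ((b%:R : F) == 1) = b.
Proof. by case: b; rewrite ?eqxx // eq_sym oner_eq0. Qed.

Lemma bit_eq1 (t : F) : is_bit t -> t = (t == 1)%:R.
Proof. by move=> /orP[]/eqP->; rewrite ?eqxx // eq_sym oner_eq0. Qed.

Lemma sgnD (a b : F) : is_bit a -> is_bit b -> sgn (a + b) = sgn a * sgn b.
Proof.
move=> /orP[]/eqP-> /orP[]/eqP->;
  by rewrite /sgn ?addr0 ?add0r ?addrr_pchar2 ?eqxx ?oner_eq0 ?mulr1 ?mul1r ?mulrNN ?mulr1.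
Qed.

Lemma sgn_mulss (a : F) : sgn a * sgn a = 1.
Proof. by rewrite /sgn; case: ifP; rewrite ?mulr1 ?mulrNN ?mulr1. Qed.

Lemma sgn0 : sgn (0 : F) = 1.
Proof. by rewrite /sgn eqxx. Qed.

Lemma sgn1 : sgn (1 : F) = -1.
Proof. by rewrite /sgn oner_eq0. Qed.

Lemma sgn_real (a : F) : sgn a \is Num.real.
Proof. by rewrite /sgn; case: ifP; rewrite ?realN real1. Qed.

Lemma sgn_nat k : sgn (k%:R : F) = (-1) ^+ k.
Proof.
rewrite -(GRing.natr_mod_pchar F_char2) modn2 -signr_odd.
by case: (odd k); rewrite ?sgn0 ?sgn1.
Qed.

End CharacteristicTwo.

Section AbsoluteTrace.
Variables (F : finFieldType) (n : nat).
Hypotheses (F_char2 : 2%N \in [pchar F]) (card_F : #|F| = (2 ^ n)%N).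
Local Notation Tr := (@Trm F n).

Lemma expr_card (x : F) : x ^+ (2 ^ n) = x.
Proof. by rewrite -card_F expf_card. Qed.

Lemma Tr_sqr (z : F) : Tr (z ^+ 2) = Tr z.
Proof. by rewrite Trm_sqr // Trm_sqr_fixed // expr_card. Qed.

Lemma Tr_is_bit (z : F) : is_bit (Tr z).
Proof. by apply: is_bitP; rewrite Trm_sqr_fixed // expr_card. Qed.

Lemma Tr_pow2 k (z : F) : Tr (z ^+ (2 ^ k)) = Tr z.
Proof. by elim: k => [|k IHk]; rewrite ?expr1 // expnSr exprM Tr_sqr. Qed.

Lemma Tr_mulbl (c z : F) : is_bit c -> Tr (c * z) = c * Tr z.
Proof. by move=> /orP[]/eqP->; rewrite ?mul0r ?Trm0 ?mul1r. Qed.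

Lemma Tr_shift k (u v : F) : (k <= n)%N ->
  Tr (u ^+ (2 ^ k) * v) = Tr (u * v ^+ (2 ^ (n - k))).
Proof.
move=> le_kn; rewrite -(Tr_pow2 k (u * _)) exprMn -exprM -expnD subnK //.
by rewrite expr_card.
Qed.

(* [Tr] is a polynomial map of degree [2 ^ n.-1 < #|F|], so it cannot vanish on all of [F]. *)
Lemma Tr_surj : exists z : F, Tr z = 1.
Proof.
have n_gt0 : (0 < n)%N.
  by case: n card_F (card_finNzRing_gt1 F) => [-> //|].
pose p : {poly F} := \sum_(i < n) 'X^(2 ^ i).
have pE x : p.[x] = Tr x.
  by rewrite horner_sum; apply: eq_bigr => i _; rewrite hornerXn.
have p_neq0 : p != 0.
  apply/eqP => /(congr1 (fun q : {poly F} => q`_1)).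
  rewrite coef_sum (bigD1 (Ordinal n_gt0)) //= big1 => [|i i_neq0].
    by rewrite coefXn addr0 coef0 => /eqP; rewrite oner_eq0.
  rewrite coefXn eq_sym -(expn0 2) eqn_exp2l //.
  by case: eqP => // i0; case/eqP: i_neq0; apply: val_inj.
have size_p : (size p <= (2 ^ n.-1).+1)%N.
  apply: leq_trans (size_sum _ _ _) _; apply/bigmax_leqP => i _.
  by rewrite size_polyXn ltnS leq_exp2l // -ltnS prednK.
have [z Tz] : exists z, Tr z != 0.
  apply/existsP; apply: contraT; rewrite negb_exists => /forallP Tr0.
  have roots_p : all (root p) (enum F).
    by apply/allP => x _; rewrite /root pE; move/negPn: (Tr0 x).
  have := leq_trans (max_poly_roots p_neq0 roots_p (enum_uniq F)) size_p.
  by rewrite -cardE card_F ltnS leq_exp2l // -ltnS prednK // ltnn.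
by exists z; case/orP: (Tr_is_bit z) Tz => /eqP->; rewrite ?eqxx.
Qed.

Lemma sum_sgn_Tr (c : F) : c != 0 -> \sum_x sgn (Tr (c * x)) = 0 :> algC.
Proof.
move=> c_neq0; have [z Tz] := Tr_surj; set S := \sum_x _.
suff : S *+ 2 = 0 by move/eqP; rewrite mulrn_eq0 => /eqP.
rewrite mulr2n {1}/S (reindex_inj (addIr (c^-1 * z))) /S -big_split /=.
apply: big1 => x _; rewrite mulrDr mulVKf // TrmD // Tz sgnD ?Tr_is_bit //.
  by rewrite sgn1 mulrN1 addNr.
by rewrite /is_bit eqxx orbT.
Qed.

Lemma sum_sgn_Tr_dual (h : F -> algC) :
  h 0 = 1 -> \sum_mu \sum_x h x * sgn (Tr (mu * x)) = (2 ^ n)%:R.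
Proof.
move=> h0; rewrite exchange_big (bigD1 0) //= [X in _ + X]big1 => [|x x_neq0].
  rewrite addr0 h0 -card_F -sumr_const; apply: eq_bigr => mu _.
  by rewrite mulr0 Trm0 sgn0 mul1r.
rewrite -mulr_sumr (eq_bigr (fun mu => sgn (Tr (x * mu)))) => [|mu _].
  by rewrite sum_sgn_Tr // mulr0.
by rewrite mulrC.
Qed.

Lemma sum_hom_neq0_trivial (g : F -> algC) :
  (forall x y, g (x + y) = g x * g y) -> \sum_x g x != 0 -> forall x, g x = 1.
Proof.
move=> gD; set S := \sum_x g x => S_neq0 y; apply: contraNeq S_neq0 => gy_neq1.
have S_gy : S = g y * S.
  by rewrite {1}/S (reindex_inj (addIr y)) mulr_sumr; apply: eq_bigr => x _; rewrite gD mulrC.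
have : S * (1 - g y) == 0 by rewrite mulrBr mulr1 {1}S_gy mulrC subrr.
by rewrite mulf_eq0 subr_eq0 [1 == _]eq_sym (negbTE gy_neq1) orbF.
Qed.

Lemma additive_char_Tr (h : F -> algC) :
    (forall x y, h (x + y) = h x * h y) -> h 0 = 1 ->
  exists mu, forall x, h x = sgn (Tr (mu * x)).
Proof.
move=> hD h0; pose chi mu x := h x * sgn (Tr (mu * x)).
have chiD mu y z : chi mu (y + z) = chi mu y * chi mu z.
  rewrite /chi hD mulrDr TrmD // sgnD ?Tr_is_bit //.
  set a := h y; set b := h z; set c := sgn _; set d := sgn _; ring.
have [mu chi_mu] : exists mu, \sum_x chi mu x != 0.
  apply/existsP; apply: contraT; rewrite negb_exists => /forallP chi0.
  have := sum_sgn_Tr_dual h0; rewrite big1 => [/eqP|mu _]; last exact/eqP/negPn/chi0.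
  by rewrite eq_sym pnatr_eq0 expn_eq0.
exists mu => x; have := sum_hom_neq0_trivial (chiD mu) chi_mu x.
rewrite /chi => chi1.
by rewrite -[h x]mulr1 -(sgn_mulss (Tr (mu * x))) mulrA chi1 mul1r.
Qed.

(* Substituting [x + a] for [x] in one factor of the square leaves
   [\sum_a sgn (f a) * \sum_x sgn (Tr (L a * x))], in which only [a = 0] survives. *)
Lemma sum_sgn_quadratic_sqr (f L : F -> F) :
    (forall x, is_bit (f x)) -> (forall a, (L a == 0) = (a == 0)) ->
    (forall x a, f (x + a) = f x + f a + Tr (L a * x)) ->
  (\sum_x sgn (f x)) ^+ 2 = (2 ^ n)%:R.
Proof.
move=> f_bit L_eq0 fD.
have L0 : L 0 = 0 by apply/eqP; rewrite L_eq0.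
have f0 : f 0 = 0.
  by have := fD 0 0; rewrite add0r L0 mul0r Trm0 addr0 addrr_pchar2.
transitivity (\sum_a \sum_x sgn (f a) * sgn (Tr (L a * x))).
  rewrite expr2 mulr_suml exchange_big; apply: eq_bigr => x _.
  rewrite mulr_sumr (reindex_inj (addrI x)); apply: eq_bigr => a _ /=.
  rewrite fD !sgnD ?is_bitD ?Tr_is_bit //.
  by rewrite -!mulrA mulrA sgn_mulss mul1r.
rewrite (bigD1 0) //= [X in _ + X]big1 => [|a a_neq0]; last first.
  by rewrite -mulr_sumr sum_sgn_Tr ?mulr0 ?L_eq0.
rewrite addr0 f0 sgn0 -mulr_sumr mul1r -card_F -sumr_const.
by apply: eq_bigr => x _; rewrite L0 mul0r Trm0 sgn0.
Qed.

Section SelfDualBasis.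
Variable alpha : 'I_n -> F.
Hypothesis alpha_self_dual : self_dual alpha.

Definition coord i (x : F) : bool := Tr (alpha i * x) == 1.

Lemma Tr_alpha_mul i x : Tr (alpha i * x) = (coord i x)%:R.
Proof. exact/bit_eq1/Tr_is_bit. Qed.

Definition from_coords (c : {ffun 'I_n -> bool}) : F := \sum_i (c i)%:R * alpha i.

Lemma coord_from_coords c : coord^~ (from_coords c) =1 c.
Proof.
move=> j; rewrite /coord mulr_sumr Trm_sum // (bigD1 j) //= big1 => [|i /negbTE ij].
  by rewrite addr0 mulrCA Tr_mulbl ?is_bit_nat // alpha_self_dual eqxx mulr1 eq1_nat_bool.
by rewrite mulrCA Tr_mulbl ?is_bit_nat // alpha_self_dual eq_sym ij mulr0.
Qed.

Lemma from_coordsK x : from_coords [ffun i => coord i x] = x.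
Proof.
have from_coords_inj : injective from_coords.
  by move=> c d cd; apply/ffunP => j; rewrite -!coord_from_coords cd.
have : x \in codom from_coords.
  apply: inj_card_onto from_coords_inj _ _.
  by rewrite card_ffun card_bool card_ord card_F.
case/codomP => c ->; congr from_coords; apply/ffunP => i.
by rewrite ffunE coord_from_coords.
Qed.

Lemma coordsE x : coords alpha x = [ffun i => coord i x].
Proof.
rewrite /coords; case: pickP => [c /eqP xc | /(_ [ffun i => coord i x])] /=.
  by apply/ffunP => i; rewrite ffunE xc coord_from_coords.
by rewrite -/(from_coords _) from_coordsK eqxx.
Qed.

Lemma wtE x : wt alpha x = (\sum_i coord i x)%N.
Proof.
rewrite /wt coordsE -sum1_card big_mkcond /=; apply: eq_bigr => i _.
by rewrite inE ffunE; case: (coord i x).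
Qed.

Lemma coordD i x y : coord i (x + y) = coord i x (+) coord i y.
Proof.
rewrite {1}/coord mulrDr TrmD // !Tr_alpha_mul.
by case: (coord i x); case: (coord i y); rewrite /= ?addr0 ?add0r ?addrr_pchar2 ?eqxx // eq_sym oner_eq0.
Qed.

Lemma Tr_mul_coords x y : Tr (x * y) = (\sum_i (coord i x && coord i y))%:R.
Proof.
rewrite -{1}(from_coordsK x) mulr_suml Trm_sum // natr_sum; apply: eq_bigr => i _.
rewrite ffunE -mulrA Tr_mulbl ?is_bit_nat // Tr_alpha_mul.
by case: (coord i x); case: (coord i y); rewrite ?mul1r ?mul0r.
Qed.

(* Over the integers [wt (x + y) = wt x + wt y - 2 |x /\ y|], and [Tr (x * y)] is the parity of [|x /\ y|]. *)
Lemma expi_wtD x y :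
  'i ^+ wt alpha (x + y) * sgn (Tr (x * y)) = 'i ^+ wt alpha x * 'i ^+ wt alpha y :> algC.
Proof.
set k := (\sum_i (coord i x && coord i y))%N.
have wtD : (wt alpha x + wt alpha y = wt alpha (x + y)%R + k * 2)%N.
  rewrite !wtE -!big_split big_distrl /= -big_split /=; apply: eq_bigr => i _.
  by rewrite coordD; case: (coord i x); case: (coord i y).
by rewrite Tr_mul_coords sgn_nat // -exprD wtD exprD exprM exprAC sqrCi.
Qed.

End SelfDualBasis.

Section QuadraticForm.
Hypotheses (n_even : ~~ odd n) (n_ge2 : (2 <= n)%N).
Local Notation m := n./2.

Lemma half_addn : n = (m + m)%N.
Proof. by rewrite -{1}(odd_double_half n) (negbTE n_even) add0n addnn. Qed.

Lemma Trm_half_add (z : F) : Trm m z + Trm m (z ^+ (2 ^ m)) = Tr z.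
Proof.
rewrite /Trm [in RHS]half_addn big_split_ord /=; congr (_ + _).
by apply: eq_bigr => i _; rewrite -exprM -expnD.
Qed.

Lemma Tr1 : Tr 1 = 0.
Proof.
rewrite /Trm (eq_bigr (fun _ => 1)) => [|i _]; last by rewrite expr1n.
by rewrite sumr_const card_ord {1}half_addn mulrnDr addrr_pchar2.
Qed.

Lemma Tr_addr_neq0 (a : F) : a != 0 -> Tr a + a != 0.
Proof.
apply: contra_neq => /eqP; rewrite addr_eq0 oppr_pchar2 // => /eqP Ta_a.
case/orP: (Tr_is_bit a) => /eqP Ta; rewrite -Ta_a Ta //.
have a1 : a = 1 by rewrite -Ta_a.
by rewrite -Tr1 -a1 Ta_a.
Qed.

Lemma sum_pow2_rev (a : F) :
  \sum_(1 <= i < m) a ^+ (2 ^ (n - i)) = \sum_(m.+1 <= i < n) a ^+ (2 ^ i).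
Proof.
rewrite big_nat_rev -(add1n m) big_addn.
have -> : (n - m = m)%N by rewrite {1}half_addn addnK.
apply: eq_big_nat => i; rewrite half_addn => lt_i; congr (a ^+ (2 ^ _)); lia.
Qed.

Lemma sum_pow2_pair (a : F) :
  \sum_(1 <= i < m) (a ^+ (2 ^ (n - i)) + a ^+ (2 ^ i)) + a ^+ (2 ^ m) = Tr a + a.
Proof.
have m_gt0 : (0 < m)%N by move: n_ge2; rewrite half_addn; lia.
have lt_mn : (m < n)%N by move: n_ge2; rewrite half_addn; lia.
rewrite /Trm -(big_mkord xpredT (fun i => a ^+ (2 ^ i))) big_ltn ?(ltn_trans m_gt0) //.
rewrite expr1 (addrC a) -addrA addrr_pchar2 // addr0.
rewrite [in RHS](@big_cat_nat _ _ _ m) ?(ltnW lt_mn) //=.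
rewrite [in RHS](@big_ltn _ _ _ m) // big_split /= sum_pow2_rev.
set A := \sum_(m.+1 <= i < n) _; set B := \sum_(1 <= i < m) _; ring.
Qed.

Lemma Qfun_polar (x a : F) :
  Qfun n (x + a) = Qfun n x + Qfun n a + Tr (x * (Tr a + a)).
Proof.
have cross_sum : \sum_(1 <= i < m) Tr ((x + a) ^+ (2 ^ i + 1)) =
    \sum_(1 <= i < m) Tr (x ^+ (2 ^ i + 1)) + \sum_(1 <= i < m) Tr (a ^+ (2 ^ i + 1))
    + Tr (x * \sum_(1 <= i < m) (a ^+ (2 ^ (n - i)) + a ^+ (2 ^ i))).
  rewrite mulr_sumr Trm_sum // -!big_split; apply: eq_big_nat => i lt_i /=.
  rewrite exprD_pow2_addn1 // !TrmD // mulrDr TrmD // Tr_shift; last first.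
    by move: lt_i; rewrite half_addn; lia.
  by rewrite (mulrC (a ^+ _)).
(* the middle term is Frobenius-fixed, so its half trace doubles up to a full trace *)
have cross_mid : Trm m ((x + a) ^+ (2 ^ m + 1)) =
    Trm m (x ^+ (2 ^ m + 1)) + Trm m (a ^+ (2 ^ m + 1)) + Tr (x * a ^+ (2 ^ m)).
  rewrite exprD_pow2_addn1 // !TrmD //; congr (_ + _).
  have -> : x ^+ (2 ^ m) * a = (a ^+ (2 ^ m) * x) ^+ (2 ^ m).
    by rewrite exprMn -exprM -expnD -half_addn expr_card mulrC.
  by rewrite addrC Trm_half_add mulrC.
rewrite /Qfun cross_sum cross_mid -sum_pow2_pair mulrDr TrmD //.
set s1 := \sum_(1 <= i < m) Tr (x ^+ _); set s2 := \sum_(1 <= i < m) Tr (a ^+ _).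
set t1 := Trm m _; set t2 := Trm m _; set u := Tr (x * _); ring.
Qed.

Lemma Qfun_is_bit (x : F) : is_bit (Qfun n x).
Proof.
apply: is_bitD => //.
  apply: (big_ind (@is_bit F)); [exact: is_bit_nat false | exact: is_bitD |].
  by move=> i _; exact: Tr_is_bit.
apply: is_bitP; apply: Trm_sqr_fixed => //.
by rewrite -exprM mulnDl mul1n -expnD -half_addn exprD expr_card addn1 exprS.
Qed.

Lemma Qfun0 : Qfun n (0 : F) = 0.
Proof. by rewrite /Qfun big1 => [|i _]; rewrite expr0n addn1 /= Trm0 ?addr0. Qed.

Theorem Qfun_bent : is_bent n (Qfun n : F -> F).
Proof.
move=> mu; apply/eqP; rewrite -(@eqrXn2 _ 2) ?normr_ge0 ?ler0n //.
rewrite real_normK ?rpred_sum // => [|x _]; last exact: sgn_real.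
rewrite -natrX -expnM muln2 -addnn -half_addn.
apply/eqP; apply: (@sum_sgn_quadratic_sqr _ (fun a => Tr a + a)) => [x|a|x a].
- by rewrite is_bitD ?Qfun_is_bit ?Tr_is_bit.
- have [->|a_neq0] := eqVneq a 0; first by rewrite Trm0 addr0 eqxx.
  by rewrite (negbTE (Tr_addr_neq0 a_neq0)).
- rewrite Qfun_polar (mulrDr mu) TrmD // [(Tr a + a) * x]mulrC.
  set u := Qfun n x; set v := Qfun n a; set w := Tr (x * _).
  set p := Tr (mu * x); set q := Tr (mu * a); ring.
Qed.

Definition expi_Tr (x : F) : algC := if Tr x == 0 then 1 else 'i.
Definition expNi_Tr (x : F) : algC := if Tr x == 0 then 1 else - 'i.

Lemma expi_TrK x : expi_Tr x * expNi_Tr x = 1.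
Proof. by rewrite /expi_Tr /expNi_Tr; case: ifP; rewrite ?mulr1 // mulrN -expr2 sqrCi opprK. Qed.

Lemma expNi_TrD x y : expNi_Tr (x + y) = expNi_Tr x * expNi_Tr y * sgn (Tr x * Tr y).
Proof.
rewrite /expNi_Tr TrmD //.
case/orP: (Tr_is_bit x) => /eqP->; case/orP: (Tr_is_bit y) => /eqP->;
  rewrite ?addr0 ?add0r ?addrr_pchar2 // ?mul0r ?mulr0 ?mul1r ?eqxx ?oner_eq0 ?sgn0 ?sgn1 ?mulr1 ?mul1r //.
by rewrite mulrNN -expr2 sqrCi mulrN1 opprK.
Qed.

Lemma sum_expi_Tr : \sum_x expi_Tr x = (2 ^ n)%:R * ((1 + 'i) / 2).
Proof.
transitivity (\sum_x ((1 + 'i) / 2 + (1 - 'i) / 2 * sgn (Tr (1 * x)))).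
  by apply: eq_bigr => x _; rewrite mul1r /expi_Tr /sgn; case: ifP => _; field.
rewrite big_split /= -[X in _ + X]mulr_sumr sum_sgn_Tr ?oner_eq0 // mulr0 addr0.
by rewrite sumr_const card_F mulr_natl.
Qed.

Lemma normC_1i : `|1 + 'i| ^+ 2 = 2 :> algC.
Proof.
rewrite normCK rmorphD /= rmorph1 conjCi.
by rewrite mulrC -subr_sqr expr1n sqrCi opprK.
Qed.

Variable alpha : 'I_n -> F.
Hypothesis alpha_self_dual : self_dual alpha.

Definition twisted_sign (x : F) : algC :=
  sgn (Qfun n x) * 'i ^+ wt alpha x * expNi_Tr x.

Lemma twisted_signD x y : twisted_sign (x + y) = twisted_sign x * twisted_sign y.
Proof.
have Tr_polar : Tr (x * (Tr y + y)) = Tr y * Tr x + Tr (x * y).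
  by rewrite mulrDr TrmD // [x * Tr y]mulrC (Tr_mulbl _ (Tr_is_bit y)).
rewrite /twisted_sign Qfun_polar Tr_polar expNi_TrD [Tr x * _]mulrC.
have := expi_wtD alpha_self_dual x y.
move: (Qfun_is_bit x) (Qfun_is_bit y) (Tr_is_bit x) (Tr_is_bit y) (Tr_is_bit (x * y)).
move: (Qfun n x) (Qfun n y) (Tr x) (Tr y) (Tr (x * y)) => qx qy tx ty txy bqx bqy btx bty btxy.
set wxy := 'i ^+ _; set wx := 'i ^+ _; set wy := 'i ^+ _ => wD.
rewrite !sgnD ?is_bitD ?is_bitM //.
transitivity (sgn qx * sgn qy * (sgn (ty * tx) * sgn (ty * tx)) * (wxy * sgn txy)
  * expNi_Tr x * expNi_Tr y); first by ring.
by rewrite sgn_mulss wD; ring.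
Qed.

Lemma twisted_sign0 : twisted_sign 0 = 1.
Proof.
rewrite /twisted_sign /expNi_Tr Qfun0 Trm0 eqxx sgn0 wtE // big1 ?mulr1 // => i _.
by rewrite /coord mulr0 Trm0 eq_sym oner_eq0.
Qed.

Lemma nega_sum_at_char mu : (forall x, twisted_sign x = sgn (Tr (mu * x))) ->
  \sum_x sgn (Qfun n x + Tr (mu * x)) * 'i ^+ wt alpha x = \sum_x expi_Tr x.
Proof.
move=> muP; apply: eq_bigr => x _; rewrite sgnD ?Qfun_is_bit ?Tr_is_bit // -muP.
have twisted_sqr : twisted_sign x * twisted_sign x = 1.
  by rewrite -twisted_signD addrr_pchar2 // twisted_sign0.
transitivity (expi_Tr x * (twisted_sign x * twisted_sign x)); last by rewrite twisted_sqr mulr1.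
rewrite -[LHS]mul1r -(expi_TrK x) /twisted_sign.
set q := sgn _; set w := _ ^+ _; set e := expi_Tr x; set e' := expNi_Tr x; ring.
Qed.

Lemma norm_sum_expi_Tr : `|\sum_x expi_Tr x| != (2 ^ m)%:R.
Proof.
apply/eqP; rewrite sum_expi_Tr => norm_sum; set N : algC := (2 ^ n)%:R.
have N_sqr : N ^+ 2 * 2 = N * 4.
  have := congr1 (fun t => t ^+ 2) norm_sum; rewrite /= -natrX -expnM muln2 -addnn -half_addn.
  rewrite normrM normr_nat normrM normfV normr_nat !exprMn normC_1i -/N => N_sqr.
  by rewrite -{2}N_sqr; field.
have : (2 ^ n.+1 = 2 ^ 2)%N.
  apply/eqP; rewrite -(eqr_nat algC) expnSr natrM -/N.
  apply/eqP; apply: (mulfI (x := N)); first by rewrite /N pnatr_eq0 expn_eq0.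
  by rewrite mulrA -expr2 N_sqr mulrC.
by move/eqP; rewrite eqn_exp2l // eqSS => /eqP n1; move: n_ge2; rewrite n1.
Qed.

Theorem Qfun_not_negabent : ~ is_negabent alpha (Qfun n : F -> F).
Proof.
move=> negabent; have [mu muP] := additive_char_Tr twisted_signD twisted_sign0.
by have := negabent mu; rewrite nega_sum_at_char //; apply/eqP/norm_sum_expi_Tr.
Qed.
End QuadraticForm.
End AbsoluteTrace.

Theorem corollary3 (n : nat) (F : finFieldType) (alpha : 'I_n -> F) :
  (2 <= n)%N -> ~~ odd n ->
  2%N \in [pchar F] -> #|F| = (2 ^ n)%N ->
  self_dual alpha ->
  is_bent n (@Qfun F n) /\ ~ is_negabent alpha (@Qfun F n).
Proof.
move=> n_ge2 n_even F_char2 card_F alpha_self_dual; split.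
  exact: Qfun_bent.
exact: Qfun_not_negabent.
Qed.
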